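(* Let $\lambda\in\Lambda$. (1) Let $m\ge1$ and $z_0,z_1\in\mathbb C_p$ with $|z_0|=|z_1|=\rho_m$ and $|z_0-z_1|\le S$. Then $|Q_\lambda(z_0)-Q_\lambda(z_1)|\le\rho_{m-1}|z_0-z_1|$. (2) If $z_0,z_1\in\{z:|z-1|<1\}$, then $|Q_\lambda(z_0)-Q_\lambda(z_1)|=p\,|z_0-z_1|$.
   Context: Let $p$ be a prime, $\mathbb C_p$ with $p$-adic absolute value, $|p|=1/p$. $\Lambda=\{\lambda\in\mathbb C_p:|\lambda-1|<1\}$, $P_\lambda(z)=\frac{\lambda}{p}z^p+\left(1-\frac{\lambda}{p}\right)z^{p+1}$, $\rho=p^{-1/(p-1)}$; $S>0$ is defined by $pS^{p-1}=\rho$; the sequence $(\rho_n)_{n\ge0}$ is defined by $\rho_0=1$ and $p\rho_n^p=\rho_{n-1}$ for $n\ge1$. Fix $\hat r\in|\mathbb C_p^*|$, $\hat r>1$, $B=\{z:|z|\le\hat r\}$; $\mathcal H(B)$ is the ring of power series $\sum a_iz^i$ convergent on $B$ with norm $\|f\|_B=\sup_i|a_i|\hat r^{\,i}$. Fix $Q\in\mathcal H(B)$ with $\|Q\|_B<\rho$, $Q^*_\lambda=P_\lambda+Q$, and let $h(\lambda)$ be the unique fixed point of $Q^*_\lambda$ in $\{z:|z-1|\le|Q(1)|/p\}$. Define $Q_\lambda(z)=P_\lambda(z+h(\lambda)-1)+Q(z+h(\lambda)-1)+1-h(\lambda)$ for $z\in B$. *)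

From HB Require Import structures.
From mathcomp Require Import all_boot all_order all_algebra.
From mathcomp Require Import reals exp.
Set Implicit Arguments. Unset Strict Implicit. Unset Printing Implicit Defensive.
Import Order.TTheory GRing.Theory Num.Theory.
Local Open Scope ring_scope.

(* An abstract model of C_p: an algebraically closed field K with an
   absolute value abs : K -> R which is non-archimedean, satisfies
   |p| = 1/p, and for which K is complete. *)
Record is_Cp (R : realType) (K : closedFieldType) (abs : K -> R) (p : nat) : Prop := {
  Cp_prime : prime p;
  Cp_abs_ge0 : forall x, 0 <= abs x;
  Cp_abs_eq0 : forall x, abs x = 0 -> x = 0;
  Cp_abs0 : abs 0 = 0;
  Cp_absM : forall x y, abs (x * y) = abs x * abs y;
  Cp_ultra : forall x y, abs (x + y) <= Num.max (abs x) (abs y);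
  Cp_absp : abs (p%:R) = (p%:R)^-1;
  Cp_complete : forall u : nat -> K,
      (forall e : R, 0 < e -> exists N, forall m n, (N <= m)%N -> (N <= n)%N ->
          abs (u m - u n) < e) ->
      exists l, forall e : R, 0 < e -> exists N, forall n, (N <= n)%N -> abs (u n - l) < e
}.

Definition series_sums (R : realType) (K : fieldType) (abs : K -> R)
    (a : nat -> K) (z v : K) : Prop :=
  forall e : R, 0 < e -> exists N, forall n, (N <= n)%N ->
    abs (\sum_(i < n) a i * z ^+ i - v) < e.

Definition rho (R : realType) (p : nat) : R := (p%:R) `^ (- ((p%:R - 1)^-1)).

(* S > 0 with p S^(p-1) = rho *)
Definition Sconst (R : realType) (p : nat) : R := (rho R p / p%:R) `^ ((p%:R - 1)^-1).

Fixpoint rhon (R : realType) (p : nat) (n : nat) : R :=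
  match n with
  | 0 => 1
  | n'.+1 => (rhon R p n' / p%:R) `^ ((p%:R)^-1)
  end.

Definition Plam (K : fieldType) (p : nat) (lam z : K) : K :=
  lam / p%:R * z ^+ p + (1 - lam / p%:R) * z ^+ p.+1.

Definition Qlam (K : fieldType) (p : nat) (Qf : K -> K) (lam h z : K) : K :=
  Plam p lam (z + h - 1) + Qf (z + h - 1) + 1 - h.

From HB Require Import structures.
From mathcomp Require Import all_boot all_order all_algebra.
From mathcomp Require Import reals exp.
From mathcomp Require Import ring.
Import Order.TTheory GRing.Theory Num.Theory.
Local Open Scope ring_scope.

(* Write w = z + h - 1.  Since |h - 1| < rho, this shift preserves the spheres |w| = rho_m
   and the disc |w - 1| < 1, and
     P_lam(w0) - P_lam(w1) = (lam/p)(w0^p - w1^p) + (1 - lam/p)(w0^(p+1) - w1^(p+1)),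
   where |lam/p| = p.  On the sphere of radius r = rho_(m+1), the binomial expansion of
   (w1 + d)^p has all middle coefficients divisible by p, so |w0^p - w1^p| <= r^p |d| as soon
   as |d|^(p-1) <= r^p, which |d| <= S guarantees; this gives the bound p r^p |d| = rho_m |d|.
   Near 1 the term -(lam/p) w0^p (w0 - w1) has size exactly p |d| and strictly dominates all
   the others.  In both regimes the perturbation Q is c-Lipschitz on the closed unit disc with
   c = ||Q||_B < rho <= rho_m, which is too small to matter. *)

Lemma powR_invnK (R : realType) (x : R) k :
  0 <= x -> (0 < k)%N -> (x `^ (k%:R)^-1) ^+ k = x.
Proof.
move=> x_ge0 k_gt0; rewrite -powR_mulrn ?powR_ge0 // -powRrM mulVf ?powRr1 //.
by rewrite pnatr_eq0 -lt0n.
Qed.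

Section Radii.
Context {R : realType} {p : nat}.
Hypothesis p_gt1 : (1 < p)%N.

Let p_gt0 : (0 < p)%N := ltnW p_gt1.
Let natr_p_gt0 : 0 < p%:R :> R. Proof. by rewrite ltr0n. Qed.
Let natr_pred : p%:R - 1 = p.-1%:R :> R.
Proof. by rewrite -{1}(prednK p_gt0) mulrSr addrK. Qed.

Lemma rho_gt0 : 0 < rho R p.
Proof. by rewrite powR_gt0. Qed.

Lemma rho_expr_pred : rho R p ^+ p.-1 = p%:R^-1.
Proof. by rewrite /rho natr_pred powRN exprVn powR_invnK // -ltnS prednK. Qed.

Lemma rho_expr : rho R p ^+ p = rho R p / p%:R.
Proof. by rewrite -[X in _ ^+ X](prednK p_gt0) exprS rho_expr_pred. Qed.

Lemma rho_le1 : rho R p <= 1.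
Proof.
have pred_gt0 : (0 < p.-1)%N by rewrite -ltnS prednK.
rewrite -(ler_pXn2r pred_gt0) ?nnegrE ?(ltW rho_gt0) // rho_expr_pred expr1n.
by rewrite invf_le1 // ler1n ltnW.
Qed.

Lemma invn_le_rho : p%:R^-1 <= rho R p.
Proof.
rewrite -rho_expr_pred -[leRHS]expr1 ler_wiXn2l ?(ltW rho_gt0) ?rho_le1 //.
by rewrite -ltnS prednK.
Qed.

Lemma Sconst_expr_pred : Sconst R p ^+ p.-1 = rho R p / p%:R.
Proof.
by rewrite /Sconst natr_pred powR_invnK ?divr_ge0 ?(ltW rho_gt0) ?ltW // -ltnS prednK.
Qed.

Lemma rhon_gt0 m : 0 < rhon R p m.
Proof. by elim: m => [|m IH] //=; rewrite powR_gt0 // divr_gt0. Qed.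

Lemma rhon_expr m : rhon R p m.+1 ^+ p = rhon R p m / p%:R.
Proof. by rewrite /= powR_invnK // divr_ge0 ?(ltW (rhon_gt0 m)) ?ltW. Qed.

Lemma rho_le_rhon m : rho R p <= rhon R p m.
Proof.
elim: m => [|m IH]; first exact: rho_le1.
rewrite -(ler_pXn2r p_gt0) ?nnegrE ?(ltW rho_gt0) ?(ltW (rhon_gt0 _)) //.
by rewrite rhon_expr rho_expr ler_pM2r ?invr_gt0.
Qed.

Lemma rhon_le1 m : rhon R p m <= 1.
Proof.
elim: m => [|m IH] //.
rewrite -(ler_pXn2r p_gt0) ?nnegrE ?(ltW (rhon_gt0 _)) // rhon_expr expr1n.
rewrite ler_pdivrMr // mul1r (le_trans IH) // ler1n ltnW //.
Qed.

End Radii.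

Definition abs_cvg {R : realType} {K : fieldType} (abs : K -> R) (u : nat -> K) (l : K) :=
  forall e : R, 0 < e -> exists N, forall n, (N <= n)%N -> abs (u n - l) < e.

Section Ultrametric.
Context {R : realType} {K : closedFieldType} {abs : K -> R} {p : nat}.
Hypothesis HK : is_Cp abs p.

Local Notation abs_ge0 := (Cp_abs_ge0 HK).
Local Notation absM := (Cp_absM HK).

Lemma absD_le x y B : abs x <= B -> abs y <= B -> abs (x + y) <= B.
Proof. by move=> hx hy; apply: le_trans (Cp_ultra HK x y) _; rewrite ge_max hx hy. Qed.

Lemma absD_lt x y B : abs x < B -> abs y < B -> abs (x + y) < B.
Proof. by move=> hx hy; apply: le_lt_trans (Cp_ultra HK x y) _; rewrite gt_max hx hy. Qed.

Lemma abs_eq0 x : (abs x == 0) = (x == 0).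
Proof.
by apply/eqP/eqP => [/(Cp_abs_eq0 HK)|->]; last exact: Cp_abs0 HK.
Qed.

Lemma abs_gt0 x : (0 < abs x) = (x != 0).
Proof. by rewrite lt_def abs_ge0 andbT abs_eq0. Qed.

Lemma abs1 : abs 1 = 1.
Proof.
have abs1_neq0 : abs 1 != 0 by rewrite abs_eq0 oner_eq0.
have abs11 := absM 1 1; rewrite mulr1 in abs11.
by apply: (mulfI abs1_neq0); rewrite mulr1 -abs11.
Qed.

Lemma absN x : abs (- x) = abs x.
Proof.
have absN1 : abs (-1) = 1.
  have /eqP : abs (-1) ^+ 2 = 1 by rewrite expr2 -absM mulrNN mulr1 abs1.
  by rewrite sqrf_eq1 => /orP [/eqP //|/eqP h]; move: (abs_ge0 (-1)); rewrite h ler0N1.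
by rewrite -mulN1r absM absN1 mul1r.
Qed.

Lemma absB x y : abs (x - y) = abs (y - x).
Proof. by rewrite -absN opprB. Qed.

Lemma absX x n : abs (x ^+ n) = abs x ^+ n.
Proof. by elim: n => [|n IH]; rewrite ?abs1 // !exprS absM IH. Qed.

Lemma absV x : abs (x^-1) = (abs x)^-1.
Proof.
have [->|x_neq0] := eqVneq x 0; first by rewrite invr0 (Cp_abs0 HK) invr0.
have absx_neq0 : abs x != 0 by rewrite abs_eq0.
by apply: (mulfI absx_neq0); rewrite -absM !mulfV ?abs1.
Qed.

Lemma absD_eql x y : abs y < abs x -> abs (x + y) = abs x.
Proof.
move=> lt_yx; apply/eqP; rewrite eq_le absD_le ?(ltW lt_yx) //=.
have := Cp_ultra HK (x + y) (- y); rewrite addrK absN le_max.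
by rewrite [abs x <= abs y]leNgt lt_yx orbF.
Qed.

Lemma abs_near1 {x} : abs (x - 1) < 1 -> abs x = 1.
Proof. by move=> x_near1; rewrite -(subrK 1 x) addrC absD_eql abs1. Qed.

Lemma abs_sum_le n (F : 'I_n -> K) B :
  0 <= B -> (forall i, abs (F i) <= B) -> abs (\sum_i F i) <= B.
Proof.
move=> B_ge0 F_le; apply: (big_ind (fun x => abs x <= B)) => [|x y|i _].
- by rewrite (Cp_abs0 HK).
- exact: absD_le.
- exact: F_le.
Qed.

Lemma abs_natr_le1 n : abs (n%:R : K) <= 1.
Proof. by elim: n => [|n IH]; rewrite ?(Cp_abs0 HK) // mulrS absD_le ?abs1. Qed.

Lemma abs_binomial_le j : (0 < j < p)%N -> abs ('C(p, j)%:R : K) <= p%:R^-1.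
Proof.
move=> /(prime_dvd_bin (Cp_prime HK)) /dvdnP [q ->].
by rewrite natrM absM (Cp_absp HK) ler_piMl ?invr_ge0 ?abs_natr_le1.
Qed.

Lemma abs_subXX n {r : R} {x y : K} :
  abs x <= r -> abs y <= r -> abs (x ^+ n.+1 - y ^+ n.+1) <= r ^+ n * abs (x - y).
Proof.
move=> x_le y_le; have r_ge0 := le_trans (abs_ge0 x) x_le.
elim: n => [|n IH]; first by rewrite expr0 mul1r.
have -> : x ^+ n.+2 - y ^+ n.+2 = x * (x ^+ n.+1 - y ^+ n.+1) + (x - y) * y ^+ n.+1.
  by rewrite !exprS; ring.
apply: absD_le; rewrite absM.
  by rewrite [r ^+ _.+1]exprS -mulrA; apply: ler_pM; rewrite ?abs_ge0.
rewrite absX mulrC ler_wpM2r ?abs_ge0 //.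
by apply: lerXn2r; rewrite ?nnegrE ?abs_ge0.
Qed.

Lemma abs_cvg_le {u l B} : abs_cvg abs u l -> (forall n, abs (u n) <= B) -> abs l <= B.
Proof.
move=> u_cvg u_le; apply/ler_addgt0Pr => e e_gt0.
have [N uN_near] := u_cvg e e_gt0.
have -> : l = u N + (- (u N - l)) by rewrite opprB addrC subrK.
have B_ge0 : 0 <= B := le_trans (abs_ge0 _) (u_le N).
apply: absD_le; first by rewrite (le_trans (u_le N)) ?lerDl ?ltW.
by rewrite absN (le_trans (ltW (uN_near N (leqnn N)))) ?lerDr.
Qed.

Lemma abs_cvgB {u v l m} : abs_cvg abs u l -> abs_cvg abs v m ->
  abs_cvg abs (fun n => u n - v n) (l - m).
Proof.
move=> u_cvg v_cvg e e_gt0.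
have [N0 u_near] := u_cvg e e_gt0; have [N1 v_near] := v_cvg e e_gt0.
exists (maxn N0 N1) => n; rewrite geq_max => /andP [N0_le N1_le].
have -> : u n - v n - (l - m) = (u n - l) + - (v n - m) by ring.
by rewrite absD_lt ?absN ?u_near ?v_near.
Qed.

Lemma abs_addXp_subXp {r : R} {w d : K} :
  p%:R^-1 <= r -> abs w <= r -> abs d <= r -> abs d ^+ p.-1 <= r ^+ p ->
  abs ((w + d) ^+ p - w ^+ p) <= r ^+ p * abs d.
Proof.
move=> invp_le_r w_le d_le dpred_le; have r_ge0 := le_trans (abs_ge0 w) w_le.
have p_gt0 := prime_gt0 (Cp_prime HK).
rewrite exprDn big_ord_recl /= subn0 expr0 mulr1 bin0 mulr1n addrC addKr.
apply: abs_sum_le => [|i]; first by rewrite mulr_ge0 ?exprn_ge0 ?abs_ge0.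
have -> : bump 0 i = i.+1 by [].
rewrite -mulr_natr !absM !absX exprSr.
have [lt_ip | ge_ip] := ltnP i.+1 p.
  have -> : r ^+ p * abs d = r ^+ (p - i.+1) * (r ^+ i * abs d) * r.
    have r_split : r ^+ p = r ^+ (p - i.+1) * r ^+ i * r.
      by rewrite -mulrA -exprSr -exprD subnK // ltnW.
    by rewrite r_split -!mulrA [r * _]mulrC.
  have C_le : abs ('C(p, i.+1)%:R : K) <= r.
    by rewrite (le_trans _ invp_le_r) // abs_binomial_le.
  apply: ler_pM; rewrite ?mulr_ge0 ?exprn_ge0 ?abs_ge0 //.
  apply: ler_pM; rewrite ?mulr_ge0 ?exprn_ge0 ?abs_ge0 //.
    by apply: lerXn2r; rewrite ?nnegrE ?abs_ge0.
  by rewrite ler_wpM2r ?abs_ge0 //; apply: lerXn2r; rewrite ?nnegrE ?abs_ge0.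
have ip : i.+1 = p by apply/eqP; rewrite eqn_leq ge_ip andbT.
rewrite ip subnn expr0 mul1r binn abs1 mulr1 -exprSr ip.
by rewrite -[X in abs d ^+ X](prednK p_gt0) exprSr ler_wpM2r ?abs_ge0.
Qed.

End Ultrametric.

Lemma Plam_sub (K : fieldType) p (lam w0 w1 : K) :
  Plam p lam w0 - Plam p lam w1 =
  lam / p%:R * (w0 ^+ p - w1 ^+ p) + (1 - lam / p%:R) * (w0 ^+ p.+1 - w1 ^+ p.+1).
Proof. by rewrite /Plam; ring. Qed.

Lemma Qlam_sub (K : fieldType) p (Qf : K -> K) (lam h z0 z1 : K) :
  Qlam p Qf lam h z0 - Qlam p Qf lam h z1 =
  Plam p lam (z0 + h - 1) - Plam p lam (z1 + h - 1) + (Qf (z0 + h - 1) - Qf (z1 + h - 1)).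
Proof. by rewrite /Qlam; ring. Qed.

Section PowerSeries.
Context {R : realType} {K : closedFieldType} {abs : K -> R} {p : nat}.
Hypothesis HK : is_Cp abs p.
Context {rhat c : R} {a : nat -> K} {Qf : K -> K}.
Hypothesis rhat_ge1 : 1 <= rhat.
Hypothesis coef_le : forall i, abs (a i) * rhat ^+ i <= c.
Hypothesis Qf_sum : forall z, abs z <= rhat -> series_sums abs a z (Qf z).

Local Notation abs_ge0 := (Cp_abs_ge0 HK).

Lemma abs_coef_le i : abs (a i) <= c.
Proof. by rewrite (le_trans _ (coef_le i)) // ler_peMr ?abs_ge0 ?exprn_ege1. Qed.

Lemma coef_bound_ge0 : 0 <= c.
Proof. exact: le_trans (abs_ge0 _) (abs_coef_le 0). Qed.

Lemma abs_Qf_le w : abs w <= 1 -> abs (Qf w) <= c.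
Proof.
move=> w_le1; have Qf_cvg := Qf_sum _ (le_trans w_le1 rhat_ge1).
apply: (abs_cvg_le HK (u := fun n => \sum_(i < n) a i * w ^+ i) Qf_cvg) => n /=.
apply: (abs_sum_le HK) => [|i]; first exact: coef_bound_ge0.
rewrite (Cp_absM HK) (absX HK) -[leRHS]mulr1.
have absw_ge0 := abs_ge0 w.
by apply: ler_pM; rewrite ?abs_ge0 ?exprn_ge0 ?abs_coef_le ?exprn_ile1.
Qed.

Lemma abs_Qf_sub_le {w0 w1} :
  abs w0 <= 1 -> abs w1 <= 1 -> abs (Qf w0 - Qf w1) <= c * abs (w0 - w1).
Proof.
move=> w0_le1 w1_le1.
have Qf_cvgB := abs_cvgB HK (u := fun n => \sum_(i < n) a i * w0 ^+ i)
  (v := fun n => \sum_(i < n) a i * w1 ^+ i)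
  (Qf_sum _ (le_trans w0_le1 rhat_ge1)) (Qf_sum _ (le_trans w1_le1 rhat_ge1)).
apply: (abs_cvg_le HK Qf_cvgB) => n /=.
rewrite -sumrB; apply: (abs_sum_le HK) => [|i].
  by rewrite mulr_ge0 ?coef_bound_ge0 ?abs_ge0.
rewrite -mulrBr (Cp_absM HK); apply: ler_pM; rewrite ?abs_ge0 ?abs_coef_le //.
case: (nat_of_ord i) => [|j]; first by rewrite subrr (Cp_abs0 HK) abs_ge0.
by rewrite (le_trans (abs_subXX HK j w0_le1 w1_le1)) ?expr1n ?mul1r.
Qed.

End PowerSeries.

Section Perturbation.
Context {R : realType} {K : closedFieldType} {abs : K -> R} {p : nat}.
Hypothesis HK : is_Cp abs p.
Context {lam : K}.
Hypothesis lam_near1 : abs (lam - 1) < 1.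

Local Notation abs_ge0 := (Cp_abs_ge0 HK).
Local Notation absM := (Cp_absM HK).

Lemma abs_lam_divp : abs (lam / p%:R) = p%:R.
Proof. by rewrite absM (absV HK) (Cp_absp HK) invrK (abs_near1 HK) ?mul1r. Qed.

Lemma abs_Plam_sub_le (r : R) w0 w1 :
  p%:R^-1 <= r -> abs w0 <= r -> abs w1 <= r -> abs (w0 - w1) ^+ p.-1 <= r ^+ p ->
  abs (Plam p lam w0 - Plam p lam w1) <= p%:R * r ^+ p * abs (w0 - w1).
Proof.
move=> invp_le_r w0_le w1_le dpred_le.
have d_le : abs (w0 - w1) <= r by rewrite (absD_le HK) ?(absN HK).
have subXp_le : abs (w0 ^+ p - w1 ^+ p) <= r ^+ p * abs (w0 - w1).
  by have := abs_addXp_subXp HK invp_le_r w1_le d_le dpred_le; rewrite [w1 + _]addrC subrK.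
have subXp1_le : abs (w0 ^+ p.+1 - w1 ^+ p.+1) <= r ^+ p * abs (w0 - w1).
  exact: (abs_subXX HK p w0_le w1_le).
have coef_le : abs (1 - lam / p%:R) <= p%:R.
  by rewrite (absD_le HK) ?(absN HK) ?abs_lam_divp ?(abs1 HK) ?ler1n ?prime_gt0 ?(Cp_prime HK).
rewrite Plam_sub -[leRHS]mulrA; apply: (absD_le HK); rewrite absM.
  by rewrite abs_lam_divp ler_wpM2l.
by apply: ler_pM; rewrite ?abs_ge0.
Qed.

Lemma abs_Plam_subD w0 w1 e :
  abs (w0 - 1) < 1 -> abs (w1 - 1) < 1 -> abs e < abs (w0 - w1) ->
  abs (Plam p lam w0 - Plam p lam w1 + e) = p%:R * abs (w0 - w1).
Proof.
move=> w0_near1 w1_near1 e_lt.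
have p_gt1 : 1 < p%:R :> R by rewrite ltr1n prime_gt1 ?(Cp_prime HK).
have p_gt0 : (0 < p)%N by rewrite prime_gt0 ?(Cp_prime HK).
have d_gt0 : 0 < abs (w0 - w1) := le_lt_trans (abs_ge0 e) e_lt.
have [w0_abs w1_abs] := (abs_near1 HK w0_near1, abs_near1 HK w1_near1).
rewrite Plam_sub (_ : _ + e = - (lam / p%:R * w0 ^+ p * (w0 - w1)) +
    ((w0 ^+ p - w1 ^+ p) * (lam / p%:R * (1 - w1) + w1) + w0 ^+ p * (w0 - w1) + e)); last first.
  by rewrite !exprSr; ring.
have lin_abs : abs (- (lam / p%:R * w0 ^+ p * (w0 - w1))) = p%:R * abs (w0 - w1).
  by rewrite (absN HK) absM [abs (_ * w0 ^+ p)]absM abs_lam_divp (absX HK) w0_abs expr1n mulr1.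
rewrite (absD_eql HK) lin_abs //.
have subXp_le : abs (w0 ^+ p - w1 ^+ p) <= abs (w0 - w1).
  have [w0_le1 w1_le1] : abs w0 <= 1 /\ abs w1 <= 1 by rewrite w0_abs w1_abs.
  have := abs_subXX HK p.-1 w0_le1 w1_le1.
  by rewrite prednK // expr1n mul1r.
have slope_lt : abs (lam / p%:R * (1 - w1) + w1) < p%:R.
  apply: (absD_lt HK); last by rewrite w1_abs.
  by rewrite absM abs_lam_divp (absB HK) gtr_pMr // (lt_trans ltr01).
apply: (absD_lt HK); first apply: (absD_lt HK).
- rewrite absM (le_lt_trans (ler_wpM2r (abs_ge0 _) subXp_le)) //.
  by rewrite [_ * abs (w0 - w1)]mulrC ltr_pM2l.
- by rewrite absM (absX HK) w0_abs expr1n mul1r ltr_pMl.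
- by rewrite (lt_trans e_lt) // ltr_pMl.
Qed.

End Perturbation.

Section Conjugation.
Context {R : realType} {K : closedFieldType} {abs : K -> R} {p : nat}.
Hypothesis HK : is_Cp abs p.
Context {rhat c : R} {a : nat -> K} {Qf : K -> K}.
Hypothesis rhat_ge1 : 1 <= rhat.
Hypothesis coef_le : forall i, abs (a i) * rhat ^+ i <= c.
Hypothesis Qf_sum : forall z, abs z <= rhat -> series_sums abs a z (Qf z).
Hypothesis c_lt_rho : c < rho R p.
Context {lam h : K}.
Hypothesis lam_near1 : abs (lam - 1) < 1.
Hypothesis h_near1 : abs (h - 1) < rho R p.

Let p_gt1 : (1 < p)%N := prime_gt1 (Cp_prime HK).

Local Notation Qlam := (Qlam p Qf lam h).

Lemma abs_Qlam_sub_le_sphere m z0 z1 :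
  abs z0 = rhon R p m.+1 -> abs z1 = rhon R p m.+1 -> abs (z0 - z1) <= Sconst R p ->
  abs (Qlam z0 - Qlam z1) <= rhon R p m * abs (z0 - z1).
Proof.
set r := rhon R p m.+1 => z0_abs z1_abs d_le_S.
have shift_abs z : abs z = r -> abs (z + h - 1) = r.
  move=> z_abs; rewrite -addrA (absD_eql HK) z_abs //.
  by rewrite (lt_le_trans h_near1) ?rho_le_rhon.
have d_eq : z0 - z1 = (z0 + h - 1) - (z1 + h - 1) by ring.
rewrite Qlam_sub d_eq; rewrite d_eq in d_le_S.
have [w0_le w1_le] : abs (z0 + h - 1) <= r /\ abs (z1 + h - 1) <= r.
  by rewrite !shift_abs.
set w0 := z0 + h - 1 in d_le_S w0_le *; set w1 := z1 + h - 1 in d_le_S w1_le *.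
have rhon_eq : rhon R p m = p%:R * r ^+ p.
  by rewrite (rhon_expr p_gt1) mulrC divfK // pnatr_eq0 gtn_eqF // ltnW.
apply: (absD_le HK).
  rewrite rhon_eq; apply: (abs_Plam_sub_le HK lam_near1) => //.
    exact: le_trans (invn_le_rho p_gt1) (rho_le_rhon p_gt1 _).
  have [d_nneg S_nneg] : abs (w0 - w1) \in Num.nneg /\ Sconst R p \in Num.nneg.
    by rewrite !nnegrE (Cp_abs_ge0 HK) powR_ge0.
  apply: le_trans (lerXn2r p.-1 d_nneg S_nneg d_le_S) _.
  by rewrite (Sconst_expr_pred p_gt1) (rhon_expr p_gt1) ler_wpM2r ?invr_ge0 ?rho_le_rhon.
have r_le1 : r <= 1 := rhon_le1 p_gt1 _.
have Qf_sub_le := abs_Qf_sub_le HK rhat_ge1 coef_le Qf_sum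
  (le_trans w0_le r_le1) (le_trans w1_le r_le1).
apply: le_trans Qf_sub_le _.
by rewrite ler_wpM2r ?(Cp_abs_ge0 HK) // ltW // (lt_le_trans c_lt_rho) ?rho_le_rhon.
Qed.

Lemma abs_Qlam_sub_residue z0 z1 :
  abs (z0 - 1) < 1 -> abs (z1 - 1) < 1 -> abs (Qlam z0 - Qlam z1) = p%:R * abs (z0 - z1).
Proof.
move=> z0_near1 z1_near1.
have [->|z01_neq] := eqVneq z0 z1; first by rewrite !subrr (Cp_abs0 HK) mulr0.
have shift_near1 z : abs (z - 1) < 1 -> abs (z + h - 1 - 1) < 1.
  move=> z_near1; rewrite (_ : _ - 1 = (z - 1) + (h - 1)); last by ring.
  by rewrite (absD_lt HK) // (lt_le_trans h_near1) ?rho_le1.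
have d_eq : z0 - z1 = (z0 + h - 1) - (z1 + h - 1) by ring.
have d_neq0 : (z0 + h - 1) - (z1 + h - 1) != 0 by rewrite -d_eq subr_eq0.
rewrite Qlam_sub d_eq.
have [w0_near1 w1_near1] := (shift_near1 z0 z0_near1, shift_near1 z1 z1_near1).
apply: (abs_Plam_subD HK lam_near1) => //.
have w_le1 w : abs (w - 1) < 1 -> abs w <= 1 by move/(abs_near1 HK) ->.
have Qf_sub_le := abs_Qf_sub_le HK rhat_ge1 coef_le Qf_sum
  (w_le1 _ w0_near1) (w_le1 _ w1_near1).
apply: le_lt_trans Qf_sub_le _.
rewrite gtr_pMl ?(abs_gt0 HK) //.
exact: lt_le_trans c_lt_rho (rho_le1 p_gt1).
Qed.

End Conjugation.

Theorem lemma3p9 (R : realType) (K : closedFieldType) (abs : K -> R) (p : nat)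
  (HK : is_Cp abs p)
  (rhat : R) (Hrhat_val : exists w : K, w != 0 /\ abs w = rhat) (Hrhat : 1 < rhat)
  (a : nat -> K) (Qf : K -> K)
  (Ha_conv : forall e : R, 0 < e -> exists N, forall i, (N <= i)%N -> abs (a i) * rhat ^+ i < e)
  (HQf : forall z, abs z <= rhat -> series_sums abs a z (Qf z))
  (HQnorm : exists c : R, c < rho R p /\ forall i, abs (a i) * rhat ^+ i <= c)
  (lam : K) (Hlam : abs (lam - 1) < 1)
  (h : K) (Hh_fix : Plam p lam h + Qf h = h)
  (Hh_disc : abs (h - 1) <= abs (Qf 1) / p%:R) :
  (forall (m : nat) (z0 z1 : K), (1 <= m)%N ->
      abs z0 = rhon R p m -> abs z1 = rhon R p m -> abs (z0 - z1) <= Sconst R p ->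
      abs (Qlam p Qf lam h z0 - Qlam p Qf lam h z1) <= rhon R p m.-1 * abs (z0 - z1))
  /\
  (forall z0 z1 : K, abs (z0 - 1) < 1 -> abs (z1 - 1) < 1 ->
      abs (Qlam p Qf lam h z0 - Qlam p Qf lam h z1) = p%:R * abs (z0 - z1)).
Proof.
(* Neither the fixed-point equation, nor the value of rhat, nor the decay of the
   coefficients is needed: only |h - 1| < rho and ||Q||_B < rho enter. *)
have [c [c_lt_rho coef_le]] := HQnorm.
have rhat_ge1 := ltW Hrhat.
have h_near1 : abs (h - 1) < rho R p.
  apply: le_lt_trans Hh_disc (le_lt_trans _ c_lt_rho).
  have Qf1_le : abs (Qf 1) <= c by rewrite (abs_Qf_le HK rhat_ge1 coef_le HQf) ?(abs1 HK).
  rewrite ler_pdivrMr ?ltr0n ?prime_gt0 ?(Cp_prime HK) // (le_trans Qf1_le) //.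
  by rewrite ler_peMr ?(coef_bound_ge0 HK rhat_ge1 coef_le) ?ler1n ?prime_gt0 ?(Cp_prime HK).
split=> [[//|m] z0 z1 _ | z0 z1].
  exact: (abs_Qlam_sub_le_sphere HK rhat_ge1 coef_le HQf c_lt_rho Hlam h_near1).
exact: (abs_Qlam_sub_residue HK rhat_ge1 coef_le HQf c_lt_rho Hlam h_near1).
Qed.
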